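(* Let $\Gamma,\Gamma'$ be graphs. The assignment $\Phi\mapsto(s(\Phi),t(\Phi))$ is a bijection between graph morphisms $\Phi:\Gamma\to\Gamma'$ and pairs $(\phi_L,\phi_R)$ of morphisms of $\mathrm{Agg}$, $\phi_L:\mathrm{agg}(\Gamma)\to\mathrm{agg}(\Gamma')$ and $\phi_R:\Gamma/\Gamma\to\Gamma'/\Gamma'$, satisfying $\phi_R\circ\mathrm v_\Gamma=\mathrm v_{\Gamma'}\circ\phi_L$. (In particular, for every $\Phi$ the square with sides $s(\Phi),t(\Phi),\mathrm v_\Gamma,\mathrm v_{\Gamma'}$ commutes.)
   Context: A graph $\Gamma=(F,V,\partial,\imath)$ consists of finite sets $F$ (flags) and $V$ (vertices), a map $\partial:F\to V$ and an involution $\imath$ of $F$. The two-element orbits of $\imath$ are the edges, the fixed points the outer flags. A graph morphism $\phi:\Gamma\to\Gamma'=(F',V',\partial',\imath')$ is a triple $(\phi_V,\phi^F,\imath_\phi)$ with $\phi_V:V\to V'$ surjective, $\phi^F:F'\to F$ injective and $\imath_\phi$ a fixed-point-free involution of $F\setminus\phi^F(F')$, such that: (i) $\phi_V\partial\phi^F=\partial'$ and $\phi_V\partial(f)=\phi_V\partial(\imath_\phi f)$ for $f\notin\phi^F(F')$; (ii) for $f\notin\phi^F(F')$, either $\{f,\imath f\}$ is an edge of $\Gamma$ and $\imath_\phi f=\imath f$, or $f$ and $\imath_\phi f$ are both outer flags of $\Gamma$; (iii) if $f'\in F'$ and $\phi^F(f')$ lies on an edge of $\Gamma$, then $\imath(\phi^F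 f')=\phi^F(\imath' f')$. Composition: $(\psi\phi)_V=\psi_V\phi_V$, $(\psi\phi)^F=\phi^F\psi^F$, $\imath_{\psi\phi}$ equals $\imath_\phi$ off $\phi^F(F')$ and $\phi^F\imath_\psi(\phi^F)^{-1}$ on $\phi^F(F'\setminus\psi^F(F''))$. An aggregate is a graph with $\imath=\mathrm{id}$; $\mathrm{Agg}$ is the full subcategory of aggregates. For a graph $\Gamma$: the total dissection is $\mathrm{agg}(\Gamma)=(F,V,\partial,\mathrm{id})$; the total contraction $\Gamma/\Gamma$ is the aggregate whose vertices are the connected components of $\Gamma$ and whose flags are the outer flags of $\Gamma$, each attached to its component. $\mathrm v_\Gamma:\mathrm{agg}(\Gamma)\to\Gamma/\Gamma$ is the morphism (component map $V\to\pi_0(\Gamma)$, inclusion of outer flags into $F$, involution $\imath$ on the inner flags), i.e. grafting of all edges followed by contraction of all edges. For $\Phi:\Gamma\to\Gamma'$: $s(\Phi):\mathrm{agg}(\Gamma)\to\mathrm{agg}(\Gamma')$ is the triple $(\Phi_V,\Phi^F,\imath_\Phi)$. $t(\Phi):\Gamma/\Gamma\to\Gamma'/\Gamma'$ has vertex map induced by $\Phi_V$ on connected components, flag map the restriction of $\Phi^F$ to the outer flags of $\Gamma'$, and involution on the remaining outer flags $f$ of $\Gamma$ given by $\imath_\Phi(f)$ if $f\notin\Phi^F(F')$ and by $\Phi^F(\imath'((\Phi^F)^{-1}f))$ if $f=\Phi^F(f')$ with $f'$ an inner flag of $\Gamma'$. *)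

From mathcomp Require Import all_boot.
Set Implicit Arguments.
Unset Strict Implicit.
Unset Printing Implicit Defensive.

Record graph := Graph {
  flag : finType;
  vert : finType;
  bd : flag -> vert;
  inv : flag -> flag;
  inv_invol : involutive inv }.
Arguments bd : clear implicits.
Arguments inv : clear implicits.

(* Data of a (candidate) graph morphism Γ -> Γ': (φ_V, φ^F, ı_φ).
   ı_φ is only meaningful off the image of φ^F; we normalise it to be the
   identity on the image of φ^F (see is_mor), so that each morphism has a
   unique representation. *)
Record mdata (G G' : graph) := MData {
  mV : {ffun vert G -> vert G'};
  mF : {ffun flag G' -> flag G};
  mI : {ffun flag G -> flag G} }.

Definition is_mor (G G' : graph) (m : mdata G G') : Prop :=
  (forall v' : vert G', exists v, mV m v = v') /\
  injective (mF m) /\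
  (forall f', mI m (mF m f') = mF m f') /\
  (forall f, f \notin codom (mF m) ->
     [/\ mI m f \notin codom (mF m), mI m f != f & mI m (mI m f) = f]) /\
  (forall f', mV m (bd G (mF m f')) = bd G' f') /\
  (forall f, f \notin codom (mF m) -> mV m (bd G f) = mV m (bd G (mI m f))) /\
  (forall f, f \notin codom (mF m) ->
     (inv G f != f /\ mI m f = inv G f) \/
     (inv G f = f /\ inv G (mI m f) = mI m f)) /\
  (forall f', inv G (mF m f') != mF m f' ->
     inv G (mF m f') = mF m (inv G' f')).

Definition mcomp (G1 G2 G3 : graph) (psi : mdata G2 G3) (phi : mdata G1 G2)
  : mdata G1 G3 :=
  MData [ffun v => mV psi (mV phi v)]
        [ffun f'' => mF phi (mF psi f'')]
        [ffun f => match [pick f' | mF phi f' == f] with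
                    | Some f' => mF phi (mI psi f')
                    | None => mI phi f
                    end].

Definition agg (G : graph) : graph :=
  @Graph (flag G) (vert G) (bd G) id (fun _ => erefl).

Definition adj (G : graph) : rel (vert G) :=
  fun v w => [exists f, (bd G f == v) && (bd G (inv G f) == w)].

Definition comp_set (G : graph) (v : vert G) : {set vert G} :=
  [set w | connect (@adj G) v w].

Definition compT (G : graph) : finType :=
  {C : {set vert G} | [exists v, C == comp_set v]}.

Definition comp_of (G : graph) (v : vert G) : compT G :=
  exist _ (comp_set v)
    (introT (@existsP _ (fun w => comp_set v == comp_set w))
            (ex_intro _ v (eqxx _))).

Definition rep (G : graph) (C : compT G) : vert G :=
  xchoose (elimT existsP (valP C)).

Definition outerT (G : graph) : finType := {f : flag G | inv G f == f}.

Definition quot (G : graph) : graph :=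
  @Graph (outerT G) (compT G) (fun f => comp_of (bd G (val f))) id
         (fun _ => erefl).

Definition vmor (G : graph) : mdata (agg G) (quot G) :=
  @MData (agg G) (quot G) [ffun v : vert G => @comp_of G v]
         [ffun f : outerT G => val f]
         [ffun f : flag G => inv G f].

Definition s_map (G G' : graph) (Phi : mdata G G') : mdata (agg G) (agg G') :=
  @MData (agg G) (agg G') (mV Phi) (mF Phi) (mI Phi).

Definition lift_sub (A T : finType) (P : pred T) (h : A -> T)
  : option {ffun A -> {x : T | P x}} :=
  (if [forall a, P (h a)] as b return [forall a, P (h a)] = b -> _
   then fun E => Some [ffun a => exist (fun x => P x) (h a)
                                   (elimT (@forallP _ (fun a => P (h a))) E a)]
   else fun _ => None) erefl.

(* t(Φ), defined (Some) when its flag map and involution land in outer flags,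
   which is the case for every morphism Φ. *)
Definition t_inv (G G' : graph) (Phi : mdata G G') (f : outerT G) : flag G :=
  if [pick f' : outerT G' | mF Phi (val f') == val f] is Some _ then val f
  else if [pick f' : flag G' | mF Phi f' == val f] is Some f'
       then mF Phi (inv G' f')
       else mI Phi (val f).

Definition t_map (G G' : graph) (Phi : mdata G G')
  : option (mdata (quot G) (quot G')) :=
  match lift_sub (fun f => inv G f == f) (fun f' : outerT G' => mF Phi (val f')),
        lift_sub (fun f => inv G f == f) (t_inv Phi) with
  | Some tF, Some tI =>
      Some (@MData (quot G) (quot G') [ffun C => comp_of (mV Phi (rep C))] tF tI)
  | _, _ => None
  end.

From Pilot Require Import Defs.
From mathcomp Require Import all_boot.
Import Defs.
Set Implicit Arguments. Unset Strict Implicit. Unset Printing Implicit Defensive.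

(* [s(Φ)] carries the same data (φ_V, φ^F, ı_φ) as Φ, so [s] is injective and
   only conditions (ii) and (iii) distinguish Φ from a morphism of aggregates.
   The involution of [v_Γ' ∘ s(Φ)] is ı_φ off φ^F(F') and φ^F ı' (φ^F)^-1 on
   it. Commutation of the square says that it agrees with ı on inner flags of
   Γ, which is exactly (ii) and (iii), and with the involution of t(Φ) on
   outer flags. For a morphism it is an involution of F whose fixed points are
   the φ^F-images of outer flags of Γ', and it only moves boundaries within a
   component; this makes t(Φ) a morphism. *)

Lemma lift_subP (A T : finType) (P : pred T) (h : A -> T) :
  (forall a, P (h a)) -> exists2 g, lift_sub P h = Some g & forall a, val (g a) = h a.
Proof.
move=> hP; rewrite /lift_sub; move: (@erefl bool [forall a, P (h a)]).
have allP : [forall a, P (h a)] by apply/forallP.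
by rewrite {2 3}allP => e; eexists => // a; rewrite ffunE.
Qed.

Lemma connect_homo (T T' : finType) (e : rel T) (e' : rel T') (h : T -> T') :
  (forall x y, e x y -> connect e' (h x) (h y)) ->
  forall x y, connect e x y -> connect e' (h x) (h y).
Proof.
move=> he x y /connectP[p]; elim: p x => [|z p IHp] x /=; first by move=> _ ->.
by case/andP=> exz pz yE; apply: connect_trans (he _ _ exz) (IHp _ pz yE).
Qed.

Section Components.
Variable G : graph.

Lemma adjC : symmetric (@adj G).
Proof.
move=> v w; apply/existsP/existsP => -[f /andP[/eqP <- /eqP <-]];
  by exists (inv G f); rewrite inv_invol !eqxx.
Qed.

Lemma comp_ofP (v w : vert G) : reflect (comp_of v = comp_of w) (connect (@adj G) v w).
Proof.
apply: (iffP idP) => [vw|/(congr1 val)/setP/(_ w)]; last by rewrite !inE connect0.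
apply: val_inj; apply/setP => x; rewrite !inE.
exact: (same_connect (sym_connect_sym adjC) vw).
Qed.

Lemma rep_comp (C : compT G) : comp_of (rep C) = C.
Proof. by apply: val_inj; move/eqP: (xchooseP (elimT existsP (valP C))). Qed.

End Components.

Section MorphismAxioms.
Variables (G G' : graph) (m : mdata G G').
Hypothesis m_mor : is_mor m.

Lemma mor_surj v' : exists v, mV m v = v'.
Proof. by case: m_mor. Qed.

Lemma mor_inj : injective (mF m).
Proof. by case: m_mor => _ []. Qed.

Lemma mor_fpf f : f \notin codom (mF m) ->
  [/\ mI m f \notin codom (mF m), mI m f != f & mI m (mI m f) = f].
Proof. by case: m_mor => _ [_ [_ [fpf _]]]; apply: fpf. Qed.

Lemma mor_bd f' : mV m (bd G (mF m f')) = bd G' f'.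
Proof. by case: m_mor => _ [_ [_ [_ [bdE _]]]]; apply: bdE. Qed.

Lemma mor_bd_pair f : f \notin codom (mF m) -> mV m (bd G f) = mV m (bd G (mI m f)).
Proof. by case: m_mor => _ [_ [_ [_ [_ [bdE _]]]]]; apply: bdE. Qed.

Lemma mor_dissect f : f \notin codom (mF m) ->
  (inv G f != f /\ mI m f = inv G f) \/ (inv G f = f /\ inv G (mI m f) = mI m f).
Proof. by case: m_mor => _ [_ [_ [_ [_ [_ [dissect _]]]]]]; apply: dissect. Qed.

Lemma mor_edge f' : inv G (mF m f') != mF m f' -> inv G (mF m f') = mF m (inv G' f').
Proof. by case: m_mor => _ [_ [_ [_ [_ [_ [_ edge]]]]]]; apply: edge. Qed.

Lemma outer_mF f' : inv G' f' = f' -> inv G (mF m f') = mF m f'.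
Proof.
move=> outer_f'; have [//|inner] := eqVneq (inv G (mF m f')) (mF m f').
by have := mor_edge inner; rewrite outer_f' => E; rewrite E eqxx in inner.
Qed.

End MorphismAxioms.

Section Dissection.
Variables G G' : graph.

Definition unagg (L : mdata (agg G) (agg G')) : mdata G G' :=
  @MData G G' (mV L) (mF L) (mI L).

Lemma unaggK (L : mdata (agg G) (agg G')) : s_map (unagg L) = L.
Proof. by case: L. Qed.

Lemma s_map_inj : injective (@s_map G G').
Proof. by case=> [V F I] [V' F' I'] [-> -> ->]. Qed.

Lemma is_mor_s_map (Phi : mdata G G') : is_mor Phi -> is_mor (s_map Phi).
Proof.
by case=> ? [? [? [? [? [? _]]]]]; do !split=> //; move=> f _; right.
Qed.

Lemma is_mor_of_s_map (Phi : mdata G G') : is_mor (s_map Phi) ->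
  (forall f, f \notin codom (mF Phi) ->
     (inv G f != f /\ mI Phi f = inv G f) \/
     (inv G f = f /\ inv G (mI Phi f) = mI Phi f)) ->
  (forall f', inv G (mF Phi f') != mF Phi f' ->
     inv G (mF Phi f') = mF Phi (inv G' f')) ->
  is_mor Phi.
Proof.
case=> surj [inj [normal [fpf [bdE [bd_pair _]]]]] dissect edge.
exact: conj surj (conj inj (conj normal
  (conj fpf (conj bdE (conj bd_pair (conj dissect edge)))))).
Qed.

End Dissection.

(* The involution of [v_Γ' ∘ s(Φ)], see [vmor_mcompE]. *)
Definition glue_inv (G G' : graph) (Phi : mdata G G') (f : flag G) : flag G :=
  if [pick g | mF Phi g == f] is Some g then mF Phi (inv G' g) else mI Phi f.

Section GlueInv.
Variables (G G' : graph) (Phi : mdata G G').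

Lemma glue_inv_notcodom f : f \notin codom (mF Phi) -> glue_inv Phi f = mI Phi f.
Proof.
rewrite /glue_inv => f_notin; case: pickP => // g /eqP gf.
by rewrite -gf codom_f in f_notin.
Qed.

Lemma glue_inv_mF : injective (mF Phi) ->
  forall g, glue_inv Phi (mF Phi g) = mF Phi (inv G' g).
Proof.
move=> Phi_inj g; rewrite /glue_inv.
by case: pickP => [g' /eqP/Phi_inj -> //|/(_ g)]; rewrite eqxx.
Qed.

Hypothesis Phi_mor : is_mor Phi.
Let Phi_inj := mor_inj Phi_mor.

Lemma glue_invK : involutive (glue_inv Phi).
Proof.
move=> f; have [/codomP[g ->]|f_notin] := boolP (f \in codom (mF Phi)).
  by rewrite !(glue_inv_mF Phi_inj) inv_invol.
have [If_notin _ IIf] := mor_fpf Phi_mor f_notin.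
by rewrite !glue_inv_notcodom.
Qed.

Lemma glue_inv_inner f : inv G f != f -> glue_inv Phi f = inv G f.
Proof.
move=> inner; have [/codomP[g fE]|f_notin] := boolP (f \in codom (mF Phi)).
  by rewrite fE (glue_inv_mF Phi_inj) -(mor_edge Phi_mor) -?fE.
rewrite glue_inv_notcodom //.
by case: (mor_dissect Phi_mor f_notin) => [[_ ->]|[outer _]] //; rewrite outer eqxx in inner.
Qed.

Lemma glue_inv_outer f : inv G f = f -> inv G (glue_inv Phi f) = glue_inv Phi f.
Proof.
move=> outer; have [/codomP[g fE]|f_notin] := boolP (f \in codom (mF Phi)).
  rewrite fE (glue_inv_mF Phi_inj).
  have [//|inner] := eqVneq (inv G (mF Phi (inv G' g))) (mF Phi (inv G' g)).
  have /Phi_inj gE : mF Phi (inv G' g) = mF Phi g.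
    by rewrite -[LHS]inv_invol (mor_edge Phi_mor inner) inv_invol -fE outer.
  by rewrite gE -fE outer eqxx in inner.
rewrite glue_inv_notcodom //.
by case: (mor_dissect Phi_mor f_notin) => [[inner _]|[_ ->]] //; rewrite outer eqxx in inner.
Qed.

Lemma glue_inv_fixed f :
  (glue_inv Phi f == f) = [exists g : outerT G', mF Phi (val g) == f].
Proof.
apply/eqP/existsP => [|[g /eqP <-]]; last by rewrite (glue_inv_mF Phi_inj) (eqP (valP g)).
have [/codomP[g ->]|f_notin] := boolP (f \in codom (mF Phi)).
  rewrite (glue_inv_mF Phi_inj) => /Phi_inj/eqP outer.
  by exists (exist _ g outer).
have [_ moved _] := mor_fpf Phi_mor f_notin.
by rewrite glue_inv_notcodom // => fixed; rewrite fixed eqxx in moved.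
Qed.

Lemma connect_glue_inv f :
  connect (@adj G') (mV Phi (bd G f)) (mV Phi (bd G (glue_inv Phi f))).
Proof.
have [/codomP[g ->]|f_notin] := boolP (f \in codom (mF Phi)).
  rewrite (glue_inv_mF Phi_inj) !(mor_bd Phi_mor); apply: connect1.
  by apply/existsP; exists g; rewrite !eqxx.
by rewrite glue_inv_notcodom // (mor_bd_pair Phi_mor f_notin) connect0.
Qed.

Lemma mV_connect v w :
  connect (@adj G) v w -> connect (@adj G') (mV Phi v) (mV Phi w).
Proof.
apply: connect_homo => _ _ /existsP[f /andP[/eqP <- /eqP <-]].
have [->|inner] := eqVneq (inv G f) f; first exact: connect0.
by rewrite -(glue_inv_inner inner); apply: connect_glue_inv.
Qed.

Lemma comp_of_mV_rep v : comp_of (mV Phi (rep (comp_of v))) = comp_of (mV Phi v).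
Proof. by apply/comp_ofP/mV_connect/comp_ofP; rewrite rep_comp. Qed.

End GlueInv.

Section Square.
Variables (G G' : graph) (Phi : mdata G G') (R : mdata (quot G) (quot G')).

Lemma mcomp_vmorE : mcomp R (vmor G) =
  @MData (agg G) (quot G') [ffun v => mV R (comp_of v)] [ffun a => val (mF R a)]
    [ffun f => if insub f : option (outerT G) is Some a then val (mI R a) else inv G f].
Proof.
congr MData; apply/ffunP => x; rewrite !ffunE //.
under eq_pick do rewrite ffunE.
case: insubP => [a _ <- | inner].
  by case: pickP => [a' /eqP/val_inj -> | /(_ a)]; rewrite ?eqxx // !ffunE.
case: pickP => [a /eqP ax|//].
by rewrite -ax (valP a) in inner.
Qed.

Lemma vmor_mcompE : mcomp (vmor G') (s_map Phi) =
  @MData (agg G) (quot G') [ffun v => comp_of (mV Phi v)] [ffun a => mF Phi (val a)]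
    [ffun f => glue_inv Phi f].
Proof.
congr MData; apply/ffunP => x; rewrite !ffunE //= /glue_inv.
by case: pickP => // g _; rewrite ffunE.
Qed.

Lemma commuteP : mcomp R (vmor G) = mcomp (vmor G') (s_map Phi) <->
  [/\ forall v, mV R (comp_of v) = comp_of (mV Phi v),
      forall a, val (mF R a) = mF Phi (val a) &
      forall f, (if insub f : option (outerT G) is Some a then val (mI R a) else inv G f)
                = glue_inv Phi f].
Proof.
rewrite mcomp_vmorE vmor_mcompE; split => [sq|[sqV sqF sqI]].
  split=> x; [have /ffunP/(_ x) := congr1 (@mV _ _) sq
             |have /ffunP/(_ x) := congr1 (@mF _ _) sq
             |have /ffunP/(_ x) := congr1 (@mI _ _) sq]; by rewrite !ffunE.
by congr MData; apply/ffunP => x; rewrite !ffunE.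
Qed.

Definition quot_spec : Prop :=
  [/\ forall C, mV R C = comp_of (mV Phi (rep C)),
      forall a, val (mF R a) = mF Phi (val a) &
      forall a, val (mI R a) = glue_inv Phi (val a)].

Lemma t_invE : injective (mF Phi) -> forall a, t_inv Phi a = glue_inv Phi (val a).
Proof.
move=> Phi_inj a; rewrite /t_inv; case: pickP => [a' /eqP a'a|_ //].
rewrite /glue_inv; case: pickP => [g /eqP|/(_ (val a'))]; last by rewrite a'a eqxx.
by rewrite -a'a => /Phi_inj ->; rewrite (eqP (valP a')).
Qed.

Lemma t_map_quot_spec : injective (mF Phi) -> quot_spec -> t_map Phi = Some R.
Proof.
move=> Phi_inj [RV RF RI].
have mF_outer (a : outerT G') : inv G (mF Phi (val a)) == mF Phi (val a).
  by rewrite -RF; exact: (valP (mF R a)).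
have t_inv_outer (a : outerT G) : inv G (t_inv Phi a) == t_inv Phi a.
  by rewrite t_invE // -RI; exact: (valP (mI R a)).
have [tF tFP tFE] := @lift_subP _ _ (fun f => inv G f == f)
  (fun a : outerT G' => mF Phi (val a)) mF_outer.
have [tI tIP tIE] := @lift_subP _ _ (fun f => inv G f == f) (t_inv Phi) t_inv_outer.
rewrite /t_map tFP tIP.
case: R RV RF RI => V F I RV RF RI; congr (Some (MData _ _ _)); apply/ffunP => x.
- by rewrite ffunE RV.
- by apply: val_inj; rewrite tFE RF.
- by apply: val_inj; rewrite tIE RI t_invE.
Qed.

Section Forward.
Hypotheses (Phi_mor : is_mor Phi) (R_spec : quot_spec).
Let Phi_inj := mor_inj Phi_mor.

Lemma quot_commute : mcomp R (vmor G) = mcomp (vmor G') (s_map Phi).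
Proof.
case: R_spec => RV RF RI; apply/commuteP; split=> [v|//|f].
  by rewrite RV (comp_of_mV_rep Phi_mor).
case: insubP => [a _ <- | inner]; first exact: RI.
by rewrite (glue_inv_inner Phi_mor).
Qed.

Lemma mem_codom_quot a : (a \in codom (mF R)) = (glue_inv Phi (val a) == val a).
Proof.
case: R_spec => _ RF _; rewrite (glue_inv_fixed Phi_mor) //.
apply/codomP/existsP => [[g ->]|[g /eqP gE]]; exists g; first by rewrite RF.
by apply: val_inj; rewrite RF gE.
Qed.

Lemma quot_mor : is_mor R.
Proof.
case: (R_spec) => RV RF RI.
split; [|split; [|split; [|split; [|split; [|split; [|split]]]]]].
- move=> C'; have [v vE] := mor_surj Phi_mor (rep C').
  by exists (comp_of v); rewrite RV (comp_of_mV_rep Phi_mor) vE rep_comp.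
- by move=> a b /(congr1 val); rewrite !RF => /Phi_inj/val_inj.
- by move=> a; apply: val_inj; rewrite RI RF (glue_inv_mF Phi_inj) // (eqP (valP a)).
- move=> a; rewrite !mem_codom_quot RI (glue_invK Phi_mor) // => moved.
  split; first by rewrite eq_sym.
    by apply: contraNneq moved => IaE; rewrite -{2}IaE RI.
  by apply: val_inj; rewrite !RI (glue_invK Phi_mor).
- by move=> a; rewrite /= RV RF (comp_of_mV_rep Phi_mor) (mor_bd Phi_mor).
- move=> a _; rewrite /= !RV !(comp_of_mV_rep Phi_mor) RI.
  by apply/comp_ofP; apply: (connect_glue_inv Phi_mor).
- by move=> a _; right.
- by move=> a; rewrite eqxx.
Qed.

End Forward.

Section Backward.
Hypothesis sq : mcomp R (vmor G) = mcomp (vmor G') (s_map Phi).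

Lemma commute_quot_spec : quot_spec.
Proof.
have [sqV sqF sqI] := commuteP.1 sq; split=> [C|//|a].
  by rewrite -{1}(rep_comp C) sqV.
by have := sqI (val a); rewrite valK.
Qed.

Lemma commute_mor : is_mor (s_map Phi) -> is_mor Phi.
Proof.
move=> s_mor; have [_ _ sqI] := commuteP.1 sq.
have Phi_inj : injective (mF Phi) := mor_inj s_mor.
apply: is_mor_of_s_map => // [f f_notin|g inner].
  have := sqI f; rewrite glue_inv_notcodom //.
  case: insubP => [a _ <- <-|inner <-]; last by left; split.
  by right; split; apply/eqP; [exact: (valP a) | exact: (valP (mI R a))].
by have := sqI (mF Phi g); rewrite insubF ?(negbTE inner) // (glue_inv_mF Phi_inj).
Qed.

End Backward.
End Square.

Lemma exists_quot_spec (G G' : graph) (Phi : mdata G G') :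
  is_mor Phi -> exists R, quot_spec Phi R.
Proof.
move=> Phi_mor.
have mF_outer (a : outerT G') : inv G (mF Phi (val a)) == mF Phi (val a).
  by apply/eqP/(outer_mF Phi_mor)/eqP; exact: (valP a).
have glue_outer (a : outerT G) : inv G (glue_inv Phi (val a)) == glue_inv Phi (val a).
  by apply/eqP/(glue_inv_outer Phi_mor)/eqP; exact: (valP a).
exists (@MData (quot G) (quot G') [ffun C => comp_of (mV Phi (rep C))]
  [ffun a => exist (fun f => inv G f == f) _ (mF_outer a) : outerT G]
  [ffun a => exist (fun f => inv G f == f) _ (glue_outer a) : outerT G]).
by split=> a; rewrite ffunE.
Qed.

Theorem proposition2p12 (G G' : graph) :
  (forall Phi : mdata G G', is_mor Phi ->
     exists2 R : mdata (quot G) (quot G'), t_map Phi = Some R &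
       [/\ is_mor (s_map Phi), is_mor R &
           mcomp R (vmor G) = mcomp (vmor G') (s_map Phi)]) /\
  (forall (L : mdata (agg G) (agg G')) (R : mdata (quot G) (quot G')),
     is_mor L -> is_mor R -> mcomp R (vmor G) = mcomp (vmor G') L ->
     exists! Phi : mdata G G', [/\ is_mor Phi, s_map Phi = L & t_map Phi = Some R]).
Proof.
split=> [Phi Phi_mor | L R].
  have [R R_quot] := exists_quot_spec Phi_mor.
  exists R; first exact: t_map_quot_spec (mor_inj Phi_mor) R_quot.
  split; first exact: is_mor_s_map.
    exact: quot_mor Phi_mor R_quot.
  exact: quot_commute Phi_mor R_quot.
rewrite -(unaggK L); move: (unagg L) => Phi s_mor _ sq.
have Phi_inj : injective (mF Phi) := mor_inj s_mor.
exists Phi; split; first split=> //.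
- exact: commute_mor sq s_mor.
- exact: t_map_quot_spec Phi_inj (commute_quot_spec sq).
by move=> Psi [_ /s_map_inj ->].
Qed.
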